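(* Let $K,N,f,d,Q$ be positive integers with $N\ge (K-1)d+3f+1$. Let $\mathbf{G}\in\{0,1\}^{QK\times N}$ be a matrix each of whose rows is either the all-zero row or contains at most $K-1$ zero entries. Let $\mathcal{F}\subseteq[N]$ with $|\mathcal{F}|\le f$ be the set of Byzantine nodes, and let $\mathcal{J}\subseteq[N]$ with $|\mathcal{J}|=N-f$ be a quorum. Suppose each node $j\in\mathcal{J}$ reports, for each $\ell\in[QK]$, a bit $\beta_{\ell,j}\in\{0,1\}$, where $\beta_{\ell,j}=\mathbf{G}_{\ell,j}$ whenever $j\notin\mathcal{F}$ (reports of Byzantine nodes are arbitrary). Then for every $\ell\in[QK]$, exactly one of the following holds: (i) $|\{j\in\mathcal{J}:\beta_{\ell,j}=0\}|\ge K+f$; (ii) $|\{j\in\mathcal{J}:\beta_{\ell,j}=1\}|\ge f+1$.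
   Context: In the protocol, $\mathbf{G}$'s $i$-th column is node $i$'s binary results vector; each row of $\mathbf{G}$ (computed honestly) is the zero pattern of a codeword of an $[N,K]$ MDS code, hence is all-zero or has at most $K-1$ zeros. A report of $0$ (resp. $1$) in entry $\ell$ is a partial signature under a $(K+f,N)$ (resp. $(f+1,N)$) threshold signature scheme, so (i) (resp. (ii)) means the leader can form a valid threshold signature endorsing $0$ (resp. $1$). Here $d\ge1$ is the degree of the verification polynomial. *)

From mathcomp Require Import all_boot all_algebra.
Set Implicit Arguments. Unset Strict Implicit. Unset Printing Implicit Defensive.

Definition row_ok (m N K : nat) (G : 'M[bool]_(m, N)) (l : 'I_m) : Prop :=
  (forall j, G l j = false) \/ #|[set j | ~~ G l j]| <= K.-1.

From mathcomp Require Import all_boot all_algebra.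
From mathcomp Require Import zify.

Set Implicit Arguments.
Unset Strict Implicit.

(* A quorum member reporting a bit different from its true entry must be
   Byzantine, so each count of reports differs from the honest count by at most
   |F|.  An all-zero row thus gets at most f ones, and hence at least
   N - 2f >= K + f zeros; any other row has at most K - 1 true zeros, so at most
   K - 1 + f reported zeros, and hence at least N - 2f - K + 1 >= f + 1 ones. *)

Lemma card_setId_predC (T : finType) (J : {set T}) (p : pred T) :
  #|[set j in J | p j]| + #|[set j in J | ~~ p j]| = #|J|.
Proof.
rewrite -(cardsID [set j | p j] J); congr (_ + _); apply: eq_card => j.
  by rewrite !inE.
by rewrite !inE andbC.
Qed.

Section Reports.

Variables (T : finType) (J F : {set T}) (beta g : T -> bool).
Hypothesis honest_reports : forall j, j \in J -> j \notin F -> beta j = g j.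

Lemma card_reported_ones_zero_row :
  (forall j, g j = false) -> #|[set j in J | beta j]| <= #|F|.
Proof.
move=> g0; apply/subset_leq_card/subsetP => j; rewrite inE => /andP[Jj bj].
by apply/negPn/negP => Fj; rewrite honest_reports // g0 in bj.
Qed.

Lemma card_reported_zeros :
  #|[set j in J | ~~ beta j]| <= #|[set j | ~~ g j]| + #|F|.
Proof.
apply: leq_trans (leq_card_setU _ _); apply/subset_leq_card/subsetP => j.
rewrite !inE => /andP[Jj bj]; case Fj: (j \in F); first by rewrite orbT.
by rewrite orbF -honest_reports ?Fj.
Qed.

End Reports.

Theorem lemma2 (K N f d Q : nat)
  (hK : 0 < K) (hN : 0 < N) (hf : 0 < f) (hd : 0 < d) (hQ : 0 < Q)
  (hNbound : (K - 1) * d + 3 * f + 1 <= N)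
  (G : 'M[bool]_(Q * K, N))
  (hG : forall l : 'I_(Q * K), @row_ok (Q * K) N K G l)
  (F J : {set 'I_N}) (hF : #|F| <= f) (hJ : #|J| = N - f)
  (beta : 'I_(Q * K) -> 'I_N -> bool)
  (hbeta : forall l j, j \in J -> j \notin F -> beta l j = G l j) :
  forall l : 'I_(Q * K),
    let A := K + f <= #|[set j in J | ~~ beta l j]| in
    let B := f + 1 <= #|[set j in J | beta l j]| in
    (A /\ ~ B) \/ (~ A /\ B).
Proof.
move=> l A B; rewrite {}/A {}/B.
have hKd : K - 1 <= (K - 1) * d by rewrite leq_pmulr.
have hsum : #|[set j in J | beta l j]| + #|[set j in J | ~~ beta l j]| = N - f.
  by rewrite card_setId_predC hJ.
case: (hG l) => [row0 | few_zeros].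
- have ones : #|[set j in J | beta l j]| <= f.
    exact: leq_trans (card_reported_ones_zero_row (hbeta l) row0) hF.
  by left; split; lia.
- have zeros : #|[set j in J | ~~ beta l j]| <= K.-1 + f.
    exact: leq_trans (card_reported_zeros (hbeta l)) (leq_add few_zeros hF).
  by right; split; lia.
Qed.
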